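(* Let $E$ be a graph and $k$ a field. (a) Let $\alpha\in\partial E$. If $W$ is a $\rho_{E,k}$-invariant subspace of $V_{([\alpha],k)}:=\mathrm{span}_k[\alpha]$ and $\beta\in W$ for some $\beta\in[\alpha]$, then $W=V_{([\alpha],k)}$. (b) Let $\alpha\in\partial E$. If $\mathcal{K}$ is a closed $\pi_E$-invariant subspace of $\mathcal{H}_{[\alpha]}:=\ell^2([\alpha])$ and $\beta\in\mathcal{K}$ for some $\beta\in[\alpha]$, then $\mathcal{K}=\mathcal{H}_{[\alpha]}$.
   Context: A graph $E=(E^0,E^1,r,s)$ has vertex set $E^0$, edge set $E^1$, range and source maps. A vertex is singular if it emits no edges or infinitely many edges, regular otherwise. Finite paths include vertices (length $0$) and sequences $e_1\cdots e_n$ with $r(e_i)=s(e_{i+1})$; infinite paths are sequences $e_1e_2\cdots$. Boundary paths $\partial E$: infinite paths together with finite paths whose range is singular. The shift $\sigma_E$ removes the first edge (fixes vertices; sends a single edge $e$ to $r(e)$); $\alpha,\beta\in\partial E$ are shift-tail equivalent if $\sigma_E^m(\alpha)=\sigma_E^n(\beta)$ for some $m,n\in\mathbb{N}$; $[\alpha]$ is the class of $\alpha$. $L_k(E)$: universal $k$-algebra generated by pairwise orthogonal idempotents $p_v$ and elements $s_e,s_e^*$ with $p_{s(e)}s_e=s_e=s_ep_{r(e)}$, $p_{r(e)}s_e^*=s_e^*=s_e^*p_{s(e)}$, $s_e^*s_f=\delta_{e,f}p_{r(e)}$, $p_v=\sum_{s(e)=v}s_es_e^*$ for regular $v$. $C^*(E)$: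 universal $C^*$-algebra generated by mutually orthogonal projections $p_v$ and partial isometries $s_e$ with mutually orthogonal ranges, $s_e^*s_e=p_{r(e)}$, $s_es_e^*\le p_{s(e)}$, $p_v=\sum_{s(e)=v}s_es_e^*$ for regular $v$. $V_{(\partial E,k)}$ is the $k$-vector space with basis $\partial E$ and $\mathcal{H}_{\partial E}=\ell^2(\partial E)$; $\rho_{E,k}:L_k(E)\to\mathrm{End}_kV_{(\partial E,k)}$ and $\pi_E:C^*(E)\to\mathbb{B}(\mathcal{H}_{\partial E})$ are given on $\alpha\in\partial E$ by: $p_v\alpha=\alpha$ if $s(\alpha)=v$, else $0$; $s_e\alpha=e\alpha$ if $s(\alpha)=r(e)$, else $0$; $s_e^*\alpha=\alpha'$ if $\alpha=e\alpha'$, else $0$. *)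

From mathcomp Require Import all_boot all_algebra.
From mathcomp Require Import complex reals.
From Stdlib Require Import ClassicalEpsilon.
From Stdlib Require List.

Set Implicit Arguments.
Unset Strict Implicit.
Unset Printing Implicit Defensive.

Local Open Scope ring_scope.

(* A directed graph E = (E^0, E^1, r, s); no countability/finiteness assumed. *)
Record graph := Graph {
  vert : Type;
  edge : Type;
  rng : edge -> vert;
  src : edge -> vert }.

Section Graphs.
Variable E : graph.

Definition regular (v : vert E) : Prop :=
  (exists e, src e = v) /\
  (exists l : seq (edge E), forall e, src e = v -> List.In e l).

Definition singular (v : vert E) : Prop := ~ regular v.

(* Raw paths: a vertex (length 0), a nonempty finite edge sequence e :: l,
   or an infinite edge sequence. *)
Inductive rpath :=
  | PV of vert E
  | PF of edge E & seq (edge E)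
  | PI of (nat -> edge E).

Fixpoint chain (e : edge E) (l : seq (edge E)) : Prop :=
  match l with
  | [::] => True
  | e' :: l' => rng e = src e' /\ chain e' l'
  end.

Definition is_bpath (p : rpath) : Prop :=
  match p with
  | PV v => singular v
  | PF e l => chain e l /\ singular (rng (last e l))
  | PI f => forall n, rng (f n) = src (f n.+1)
  end.

Definition psrc (p : rpath) : vert E :=
  match p with
  | PV v => v
  | PF e _ => src e
  | PI f => src (f 0%N)
  end.

Definition shift (p : rpath) : rpath :=
  match p with
  | PV v => PV v
  | PF e [::] => PV (rng e)
  | PF _ (e' :: l) => PF e' l
  | PI f => PI (fun n => f n.+1)
  end.

(* concatenation e p (meaningful when psrc p = rng e) *)
Definition prepend (e : edge E) (p : rpath) : rpath :=
  match p with
  | PV _ => PF e [::]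
  | PF e' l => PF e (e' :: l)
  | PI f => PI (fun n => if n is m.+1 then f m else e)
  end.

Definition tail_equiv (a b : rpath) : Prop :=
  exists m n : nat, iter m shift a = iter n shift b.

Definition in_class (a b : rpath) : Prop := is_bpath b /\ tail_equiv a b.

(* Vectors are coefficient functions on paths.  The action of the
   generators p_v, s_e, s_e^* (the formulas defining rho_{E,k} resp. pi_E
   on basis vectors, extended to coefficient functions). *)
Definition opP (K : zmodType) (v : vert E) (f : rpath -> K) : rpath -> K :=
  fun x => if excluded_middle_informative (psrc x = v) then f x else 0.

Definition opS (K : zmodType) (e : edge E) (f : rpath -> K) : rpath -> K :=
  fun x => if excluded_middle_informative
                (exists y, x = prepend e y /\ psrc y = rng e)
           then f (shift x) else 0.

Definition opSs (K : zmodType) (e : edge E) (f : rpath -> K) : rpath -> K :=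
  fun y => if excluded_middle_informative (psrc y = rng e)
           then f (prepend e y) else 0.

Definition delta (K : pzRingType) (b : rpath) : rpath -> K :=
  fun x => if excluded_middle_informative (x = b) then 1 else 0.

Definition gen_invariant (K : zmodType) (W : (rpath -> K) -> Prop) : Prop :=
  (forall v f, W f -> W (opP v f)) /\
  (forall e f, W f -> W (opS e f)) /\
  (forall e f, W f -> W (opSs e f)).

(* ---- (a) V_([alpha],k) = span_k [alpha] : finitely supported on [alpha] *)
Definition Vcls (k : fieldType) (a : rpath) (f : rpath -> k) : Prop :=
  (exists l : seq rpath, forall x, f x <> 0 -> List.In x l) /\
  (forall x, f x <> 0 -> in_class a x).

Definition subspace (k : fieldType) (W : (rpath -> k) -> Prop) : Prop :=
  W (fun _ => 0) /\
  (forall f g, W f -> W g -> W (fun x => f x + g x)) /\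
  (forall (c : k) f, W f -> W (fun x => c * f x)).

(* ---- (b) H_[alpha] = l^2([alpha]) with complex coefficients *)
Definition sqmod (R : realType) (z : R[i]) : R :=
  let: Complex a b := z in a ^+ 2 + b ^+ 2.

Definition sqsum (R : realType) (l : seq rpath) (f : rpath -> R[i]) : R :=
  \sum_(x <- l) sqmod (f x).

Definition l2 (R : realType) (f : rpath -> R[i]) : Prop :=
  exists B : R, forall l, List.NoDup l -> sqsum l f <= B.

Definition Hcls (R : realType) (a : rpath) (f : rpath -> R[i]) : Prop :=
  l2 f /\ (forall x, f x <> 0 -> in_class a x).

Definition l2_conv (R : realType) (u : nat -> rpath -> R[i]) (f : rpath -> R[i])
  : Prop :=
  forall eps : R, 0 < eps -> exists N : nat, forall n : nat, (N <= n)%N ->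
    forall l, List.NoDup l -> sqsum l (fun x => u n x - f x) <= eps.

Definition csubspace (R : realType) (K : (rpath -> R[i]) -> Prop) : Prop :=
  K (fun _ => 0) /\
  (forall f g, K f -> K g -> K (fun x => f x + g x)) /\
  (forall (c : R[i]) f, K f -> K (fun x => c * f x)).

Definition l2_closed (R : realType) (a : rpath) (K : (rpath -> R[i]) -> Prop)
  : Prop :=
  forall (u : nat -> rpath -> R[i]) f,
    (forall n, K (u n)) -> Hcls a f -> l2_conv u f -> K f.

End Graphs.

Arguments PV {E}.
Arguments PF {E}.
Arguments PI {E}.

(* The generators move basis vectors along shifts: if β = e σ(β) then
   s_e^* δ_β = δ_{σ(β)} and s_e δ_{σ(β)} = δ_β.  Hence an invariant subspace
   containing one δ_β contains δ_x for every x shift-tail equivalent to β,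
   and so every finitely supported vector on [α].  These are all of
   V_([α],k); in ℓ²([α]) they are dense, since the restrictions of an ℓ²
   vector to larger and larger finite sets converge to it, and a closed
   subspace containing them is everything. *)
From mathcomp Require Import all_boot all_order all_algebra.
From mathcomp Require Import complex reals classical_sets boolp.
From Stdlib Require Import ClassicalEpsilon.
From Stdlib Require List.

Set Implicit Arguments.
Unset Strict Implicit.
Unset Printing Implicit Defensive.
Import Order.TTheory GRing.Theory Num.Theory.
Local Open Scope ring_scope.

Section Paths.
Variable E : graph.
Implicit Types (e : edge E) (x y : rpath E).

Lemma shift_prepend e y : psrc y = rng e -> shift (prepend e y) = y.
Proof. by case: y => [v|e' l|f] //= <-. Qed.

Lemma bpath_shift x : is_bpath x -> is_bpath (shift x).
Proof. by case: x => [v|e [|e' l]|f] //= [[]]. Qed.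

Lemma bpath_iter_shift n x : is_bpath x -> is_bpath (iter n (@shift E) x).
Proof. by elim: n => //= n IHn /IHn /bpath_shift. Qed.

Lemma bpath_shiftP x : is_bpath x ->
  shift x = x \/ exists2 e, x = prepend e (shift x) & psrc (shift x) = rng e.
Proof.
case: x => [v|e l|f] /=; first by left.
- by case: l => [|e' l] /= bp; right; exists e => //; case: bp => [[]].
- move=> chain_f; right; exists (f 0%N); last by rewrite /= chain_f.
  by congr PI; apply: funext => -[].
Qed.

Lemma tail_equiv_sym x y : tail_equiv x y -> tail_equiv y x.
Proof. by case=> m [n xy]; exists n, m. Qed.

Lemma tail_equiv_trans x y z :
  tail_equiv x y -> tail_equiv y z -> tail_equiv x z.
Proof.
case=> m1 [n1 xy] [m2 [n2 yz]]; exists (m2 + m1)%N, (n2 + n1)%N.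
by rewrite !iterD xy -!iterD addnC iterD yz -iterD addnC.
Qed.

End Paths.

Section GeneratorsOnBasis.
Variables (E : graph) (K : pzRingType).
Implicit Types (e : edge E) (x y : rpath E).

Lemma opSs_delta e x : x = prepend e (shift x) -> psrc (shift x) = rng e ->
  opSs e (delta K x) = delta K (shift x).
Proof.
move=> xE src_x; apply: funext => y; rewrite /opSs /delta.
case: excluded_middle_informative => [src_y|src_y].
- do 2 case: excluded_middle_informative => //.
  + by move=> neq yx; case: neq; rewrite -yx shift_prepend.
  + by move=> yx neq; case: neq; rewrite yx -xE.
- case: (excluded_middle_informative (y = shift x)) => // yx.
  by exfalso; apply: src_y; rewrite yx.
Qed.

Lemma opS_delta e y : psrc y = rng e ->
  opS e (delta K y) = delta K (prepend e y).
Proof.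
move=> src_y; apply: funext => x; rewrite /opS /delta.
case: excluded_middle_informative => [[z [xz src_z]]|not_prepend].
- case: (excluded_middle_informative (x = prepend e y)) => [xy|neq];
    case: (excluded_middle_informative (shift x = y)) => //.
  + by case; rewrite xy shift_prepend.
  + by move=> shift_x; case: neq; rewrite xz -shift_x xz shift_prepend.
- case: (excluded_middle_informative (x = prepend e y)) => // xy.
  by case: not_prepend; exists y.
Qed.

Variable W : (rpath E -> K) -> Prop.
Hypothesis W_inv : gen_invariant W.

Lemma invariant_delta_shift x : is_bpath x ->
  W (delta K (shift x)) <-> W (delta K x).
Proof.
case/bpath_shiftP => [-> //|[e xE src_x]].
case: W_inv => _ [W_S W_Ss]; split.
- by move/(W_S e); rewrite opS_delta // -xE.
- by move/(W_Ss e); rewrite opSs_delta.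
Qed.

Lemma invariant_delta_iter_shift n x : is_bpath x ->
  W (delta K (iter n (@shift E) x)) <-> W (delta K x).
Proof.
elim: n => //= n IHn bp_x.
by rewrite invariant_delta_shift ?IHn //; apply: bpath_iter_shift.
Qed.

Lemma invariant_delta_tail_equiv x y : is_bpath x -> is_bpath y ->
  tail_equiv x y -> W (delta K x) -> W (delta K y).
Proof.
move=> bp_x bp_y [m [n xy]].
by rewrite -(invariant_delta_iter_shift m bp_x) xy invariant_delta_iter_shift.
Qed.

Lemma invariant_delta_class a b x : in_class a b -> in_class a x ->
  W (delta K b) -> W (delta K x).
Proof.
move=> [bp_b ab] [bp_x ax]; apply: invariant_delta_tail_equiv => //.
exact: tail_equiv_trans (tail_equiv_sym ab) ax.
Qed.

End GeneratorsOnBasis.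

Section FiniteSupport.
Variables (E : graph) (K : pzRingType) (W : (rpath E -> K) -> Prop).
Hypotheses (W0 : W (fun _ => 0))
  (WD : forall f g, W f -> W g -> W (fun x => f x + g x))
  (WZ : forall c f, W f -> W (fun x => c * f x)).

Lemma finsupp_mem (l : seq (rpath E)) (f : rpath E -> K) :
  (forall x, f x <> 0 -> List.In x l) ->
  (forall x, f x <> 0 -> W (delta K x)) -> W f.
Proof.
elim: l f => [|x0 l IHl] f supp_f W_delta.
  have -> : f = (fun _ => 0) => //.
  by apply: funext => x; apply: contrapT => /supp_f.
pose g x := if `[< x = x0 >] then 0 else f x.
have g_supp x : g x <> 0 -> x <> x0 /\ f x <> 0.
  by rewrite /g; case: asboolP.
have -> : f = (fun x => f x0 * delta K x0 x + g x).
  apply: funext => x; rewrite /g /delta.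
  case: asboolP => [->|x_neq]; case: excluded_middle_informative => // ?.
  - by rewrite mulr1 addr0.
  - by rewrite mulr0 add0r.
apply: WD; last apply: IHl => x /g_supp [x_neq fx_neq].
- have [fx0|/eqP/W_delta/(WZ (f x0)) //] := eqVneq (f x0) 0.
  have -> : (fun x => f x0 * delta K x0 x) = (fun _ => 0) => //.
  by apply: funext => x; rewrite fx0 mul0r.
- by case: (supp_f x fx_neq) => // x0x; case: x_neq.
- exact: W_delta.
Qed.

End FiniteSupport.

Section L2Truncation.
Variables (E : graph) (R : realType).
Implicit Types (l L : seq (rpath E)) (f : rpath E -> R[i]).

Definition restrict L f x := if `[< List.In x L >] then f x else 0.

Lemma restrict_neq0 L f x : restrict L f x <> 0 -> List.In x L /\ f x <> 0.
Proof. by rewrite /restrict; case: asboolP. Qed.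

Lemma sqmod0 : sqmod (0 : R[i]) = 0.
Proof. by rewrite /= expr0n addr0. Qed.

Lemma sqmodN (z : R[i]) : sqmod (- z) = sqmod z.
Proof. by case: z => a b /=; rewrite !sqrrN. Qed.

Lemma sqsum_restrict_subr L l f :
  sqsum l (fun x => restrict L f x - f x) =
  sqsum [seq x <- l | ~~ `[< List.In x L >]] f.
Proof.
rewrite /sqsum big_filter [RHS]big_mkcond; apply: eq_bigr => x _.
by rewrite /restrict; case: asboolP => _; rewrite ?subrr ?sqmod0 ?sub0r ?sqmodN.
Qed.

Lemma l2_tail f eps : l2 f -> 0 < eps -> exists L,
  forall l, List.NoDup l -> sqsum [seq x <- l | ~~ `[< List.In x L >]] f < eps.
Proof.
move=> [B sqsum_le] eps_gt0.
pose S : set R := fun r => exists2 l, List.NoDup l & r = sqsum l f.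
have supS : has_sup S.
  split; first by exists (sqsum [::] f), [::] => //; constructor.
  by exists B => _ [l ndl ->]; exact: sqsum_le.
have [_ [L ndL ->] sqsum_L] := sup_adherent eps_gt0 supS.
exists L => l ndl; set l' := filter _ l.
have : sqsum (l' ++ L) f <= sup S.
  apply: sup_upper_bound => //; exists (l' ++ L) => //.
  apply: List.NoDup_app => //; first exact: List.NoDup_filter.
  by move=> x /List.filter_In [_ /asboolP].
rewrite /sqsum big_cat /= -!/(sqsum _ f) => le_sup.
by rewrite -(ltrD2r (sqsum L f)) (le_lt_trans le_sup) // -ltrBlDl.
Qed.

Lemma l2_conv_restrict f : l2 f ->
  exists L : nat -> seq (rpath E), l2_conv (fun n => restrict (L n) f) f.
Proof.
move=> l2f.
have inv_gt0 (n : nat) : 0 < (n.+1%:R : R)^-1 by rewrite invr_gt0 ltr0Sn.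
have [L tailL] := boolp.choice (fun n => l2_tail l2f (inv_gt0 n)).
exists L => eps eps_gt0; exists (Num.truncn eps^-1) => n le_N_n l ndl.
rewrite sqsum_restrict_subr; apply/ltW/(lt_le_trans (tailL n l ndl)).
rewrite -[leRHS]invrK lef_pV2 ?posrE ?invr_gt0 ?ltr0Sn //.
by apply/ltW/(lt_le_trans (truncnS_gt _)); rewrite ler_nat.
Qed.

End L2Truncation.

Theorem lemma3p10 (E : graph) :
  (* (a) *)
  (forall (k : fieldType) (a : rpath E) (W : (rpath E -> k) -> Prop),
     is_bpath a ->
     subspace W -> (forall f, W f -> Vcls a f) -> gen_invariant W ->
     (exists b, in_class a b /\ W (delta k b)) ->
     forall f, W f <-> Vcls a f) /\
  (* (b) *)
  (forall (R : realType) (a : rpath E) (K : (rpath E -> R[i]) -> Prop),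
     is_bpath a ->
     csubspace K -> (forall f, K f -> Hcls a f) -> l2_closed a K ->
     gen_invariant K ->
     (exists b, in_class a b /\ K (delta R[i] b)) ->
     forall f, K f <-> Hcls a f).
Proof.
split.
- move=> k a W _ [W0 [WD WZ]] W_V W_inv [b [ab Wb]] f.
  split=> [|[[l supp_f] class_f]]; first exact: W_V.
  apply: (finsupp_mem W0 WD WZ supp_f) => x /class_f ax.
  exact: (invariant_delta_class W_inv ab ax Wb).
- move=> R a K _ [K0 [KD KZ]] K_H K_closed K_inv [b [ab Kb]] f.
  split=> [|H_f]; first exact: K_H.
  have [l2f class_f] := H_f.
  have [L conv] := l2_conv_restrict l2f.
  apply: (K_closed _ _ _ H_f conv) => n.
  have supp_Ln x : restrict (L n) f x <> 0 -> List.In x (L n).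
    by case/restrict_neq0.
  apply: (finsupp_mem K0 KD KZ supp_Ln) => x /restrict_neq0 [_ /class_f ax].
  exact: (invariant_delta_class K_inv ab ax Kb).
Qed.
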